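(* For every permutation $\sigma$ and every Cayley permutation $y$, $$\mathrm{Flat}(\sigma)=\gamma\bigl(\mathrm{RGF}[\sigma^{-1}]\bigr)\qquad\text{and}\qquad\gamma\bigl(\mathrm{RGF}[y]\bigr)=\mathrm{Flat}\bigl(\gamma(y)\bigr).$$ In particular $|\mathrm{Flat}_n(\sigma)|=|\mathrm{RGF}_n[\sigma^{-1}]|$ for every $n$.
   Context: A Cayley permutation of length $n$ is a word of positive integers in which every integer from $1$ to its maximum occurs. Containment $y\le x$: there are indices $i_1<\dots<i_k$ ($k$ the length of $y$) with $x(i_s)<x(i_t)\iff y(s)<y(t)$ and $x(i_s)=x(i_t)\iff y(s)=y(t)$; otherwise $x$ avoids $y$. For $x$ of length $n$, $\gamma(x)$ is the permutation of $[n]$ obtained by sorting the pairs $(x(i),i)$ increasingly by first coordinate, ties by decreasing second coordinate, and reading off the second coordinates; $\gamma(E)=\{\gamma(x):x\in E\}$. $x\sim y$ iff $\gamma(x)=\gamma(y)$; $[y]$ is the class of $y$; for a set $E$ of Cayley permutations, $E[y]$ is the set of elements of $E$ avoiding every element of $[y]$. $\mathrm{RGF}_n$ (restricted growth functions) is the set of Cayley permutations $x$ of length $n$ with $x(1)=1$ (if $n\ge1$) and $x(i+1)\le\max\{x(1),\dots,x(i)\}+1$ for $1\le i<n$; $\mathrm{RGF}=\bigcup_n\mathrm{RGF}_n$. $\mathrm{Flat}$ is the set of permutations avoiding the vincular pattern $23\text{-}1$, i.e. permutations $\pi$ with no indices $i$ and $k>i+1$ such that $\pi(k)<\pi(i)<\pi(i+1)$;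 $\mathrm{Flat}_n(\sigma)$ is the set of elements of $\mathrm{Flat}$ of length $n$ avoiding $\sigma$. *)

From mathcomp Require Import all_boot.
From mathcomp Require Import boolp.

Set Implicit Arguments.
Unset Strict Implicit.
Unset Printing Implicit Defensive.

(* Words of positive integers are represented as [seq nat]; positions are
   0-based internally (position i of the seq is position i+1 of the paper). *)

Definition wmax (x : seq nat) : nat := foldr maxn 0 x.

Definition is_cayley (x : seq nat) : Prop :=
  (forall i, i < size x -> 0 < nth 0 x i) /\
  (forall k, 1 <= k <= wmax x -> k \in x).

Definition is_perm (s : seq nat) : Prop := is_cayley s /\ uniq s.

Definition perm_inv (s : seq nat) : seq nat :=
  [seq (index v s).+1 | v <- iota 1 (size s)].

Definition order_iso (z y : seq nat) : Prop :=
  size z = size y /\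
  forall s t, s < size y -> t < size y ->
    ((nth 0 z s < nth 0 z t) <-> (nth 0 y s < nth 0 y t)) /\
    ((nth 0 z s = nth 0 z t) <-> (nth 0 y s = nth 0 y t)).

Definition contains (x y : seq nat) : Prop :=
  exists m : bitseq, size m = size x /\ order_iso (mask m x) y.

Definition avoids (x y : seq nat) : Prop := ~ contains x y.

Definition gamma_rel (p q : nat * nat) : bool :=
  (p.1 < q.1) || ((p.1 == q.1) && (q.2 <= p.2)).

Definition gamma (x : seq nat) : seq nat :=
  [seq p.2 | p <- sort gamma_rel (zip x (iota 1 (size x)))].

Definition gamma_img (E : seq nat -> Prop) : seq nat -> Prop :=
  fun pi => exists x, E x /\ gamma x = pi.

Definition avoid_class (E : seq nat -> Prop) (y : seq nat) : seq nat -> Prop :=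
  fun x => E x /\ forall z, is_cayley z -> gamma z = gamma y -> avoids x z.

Definition is_rgf (x : seq nat) : Prop :=
  is_cayley x /\
  (0 < size x -> nth 0 x 0 = 1) /\
  (forall i, 1 <= i < size x -> nth 0 x i <= (wmax (take i x)).+1).

(* Flattened permutations: avoid the vincular pattern 23-1. *)
Definition is_flat (pi : seq nat) : Prop :=
  is_perm pi /\
  ~ (exists i k, i.+1 < k /\ k < size pi /\
        nth 0 pi k < nth 0 pi i /\ nth 0 pi i < nth 0 pi i.+1).

Definition Flat (sigma : seq nat) : seq nat -> Prop :=
  fun pi => is_flat pi /\ avoids pi sigma.

(* Number of words of length n in E, for E a set of Cayley permutations
   (whose elements of length n have all entries in 1..n, hence are
   faithfully encoded by n-tuples over 'I_(n+1)). *)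
Definition count_len (E : seq nat -> Prop) (n : nat) : nat :=
  #|[set t : n.-tuple 'I_n.+1 | `[< E [seq val i | i <- t] >] ]|.

(* On restricted growth functions, [gamma] is injective with image exactly
   the flattened permutations: if [pi = gamma x] for an RGF [x], the entry of
   [x] at position [pi j] is one plus the number of ascents of [pi] before [j];
   conversely this formula turns a flattened permutation into an RGF, the
   absence of [23-1] being what makes the growth condition hold.  Moreover
   [gamma] transports containment in both directions: an occurrence of [z] in
   [x] gives an occurrence of [gamma z] in [gamma x], and every occurrence of a
   pattern in [gamma x] is [gamma] of a subword of [x].  So [x] avoids the
   class of [y] iff [gamma x] avoids [gamma y], and [gamma (sigma^-1) = sigma]
   for a permutation [sigma]. *)

From mathcomp Require Import all_boot.
From mathcomp Require Import zify boolp.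

Set Implicit Arguments.
Unset Strict Implicit.
Unset Printing Implicit Defensive.

Lemma leq_wmax x v : v \in x -> v <= wmax x.
Proof.
elim: x => //= a x IH; rewrite in_cons => /orP [/eqP ->|/IH h].
  by rewrite leq_maxl.
by rewrite (leq_trans h) // leq_maxr.
Qed.

Lemma wmax_leq x b : (forall v, v \in x -> v <= b) -> wmax x <= b.
Proof.
elim: x => //= a x IH h; rewrite geq_max h ?mem_head //.
by apply: IH => v hv; apply: h; rewrite in_cons hv orbT.
Qed.

Lemma wmax_in x : 0 < size x -> wmax x \in x.
Proof.
elim: x => // a [|b x] IH _; first by rewrite /= maxn0 mem_head.
rewrite /= in_cons -/(wmax (b :: x)).
by case: (leqP a (wmax (b :: x))) => _; rewrite ?eqxx ?IH ?orbT.
Qed.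

(* [entry x p] is the entry of [x] at the 1-based position [p], the indexing
   of the paper, in which [gamma x] lists positions. *)
Definition entry (x : seq nat) (p : nat) := nth 0 x p.-1.

Lemma map_entry_iota x : map (entry x) (iota 1 (size x)) = x.
Proof.
apply: (eq_from_nth (x0 := 0)); rewrite size_map size_iota // => i hi.
by rewrite (nth_map 0) ?size_iota // nth_iota.
Qed.

Lemma mask_entry x m : mask m x = map (entry x) (mask m (iota 1 (size x))).
Proof. by rewrite map_mask map_entry_iota. Qed.

Lemma entry_mem x p : 0 < p <= size x -> entry x p \in x.
Proof. by case: p => // p hp; rewrite /entry /= mem_nth. Qed.

Lemma entry_onto x v : v \in x -> exists2 p, 0 < p <= size x & entry x p = v.
Proof.
by move=> vx; exists (index v x).+1; rewrite ?index_mem // /entry nth_index.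
Qed.

Definition gamma_le (x : seq nat) : rel nat :=
  fun p q => gamma_rel (entry x p, p) (entry x q, q).

Lemma zip_iota x m :
  zip x (iota m (size x)) = [seq (nth 0 x (p - m), p) | p <- iota m (size x)].
Proof.
elim: x m => //= a x IH m; rewrite subnn IH; congr (_ :: _).
apply/eq_in_map => p; rewrite mem_iota => /andP [h1 _].
by rewrite [p - m](_ : _ = (p - m.+1).+1) //; lia.
Qed.

Lemma gammaE x : gamma x = sort (gamma_le x) (iota 1 (size x)).
Proof.
rewrite /gamma zip_iota sort_map -map_comp map_id; congr sort.
by apply/funext => p; apply/funext => q; rewrite /gamma_le /entry /= !subn1.
Qed.

Lemma gamma_rel_total : total gamma_rel.
Proof.
move=> [a p] [b q]; rewrite /gamma_rel /=.
by case: (ltngtP a b) => //= _; exact: leq_total.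
Qed.

Lemma gamma_rel_trans : transitive gamma_rel.
Proof.
move=> [b q] [a p] [c r]; rewrite /gamma_rel /=.
case/orP=> [h1|/andP[/eqP e1 h1]]; case/orP=> [h2|/andP[/eqP e2 h2]].
- by rewrite (ltn_trans h1 h2).
- by rewrite -e2 h1.
- by rewrite e1 h2.
- by rewrite e1 e2 eqxx (leq_trans h2 h1) orbT.
Qed.

Lemma gamma_rel_anti : antisymmetric gamma_rel.
Proof.
move=> [a p] [b q]; rewrite /gamma_rel /=.
case: (ltngtP a b) => [//|//|->] h.
by rewrite (@anti_leq p q) // andbC.
Qed.

Lemma gamma_le_total x : total (gamma_le x).
Proof. by move=> p q; exact: gamma_rel_total. Qed.

Lemma gamma_le_trans x : transitive (gamma_le x).
Proof. by move=> q p r; exact: gamma_rel_trans. Qed.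

Lemma gamma_le_anti x : antisymmetric (gamma_le x).
Proof. by move=> p q /gamma_rel_anti []. Qed.

Lemma gamma_le_refl x : reflexive (gamma_le x).
Proof. by move=> p; rewrite /gamma_le /gamma_rel /= eqxx leqnn orbT. Qed.

Lemma perm_gamma_iota x : perm_eq (gamma x) (iota 1 (size x)).
Proof. by rewrite gammaE perm_sort. Qed.

Lemma sorted_gamma x : sorted (gamma_le x) (gamma x).
Proof. by rewrite gammaE; apply: sort_sorted; apply: gamma_le_total. Qed.

Lemma size_gamma x : size (gamma x) = size x.
Proof. by rewrite (perm_size (perm_gamma_iota x)) size_iota. Qed.

Lemma uniq_gamma x : uniq (gamma x).
Proof. by rewrite (perm_uniq (perm_gamma_iota x)) iota_uniq. Qed.

Lemma mem_gamma x p : (p \in gamma x) = (0 < p <= size x).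
Proof. by rewrite (perm_mem (perm_gamma_iota x)) mem_iota add1n ltnS. Qed.

Lemma sorted_gamma_le_sort x s t :
  sorted (gamma_le x) s -> perm_eq s t -> s = sort (gamma_le x) t.
Proof.
move=> ss pst; apply: (sorted_eq (@gamma_le_trans x) (@gamma_le_anti x)) => //.
  by apply: sort_sorted; apply: gamma_le_total.
by rewrite perm_sym perm_sort perm_sym.
Qed.

Lemma cayley_gt0 x v : is_cayley x -> v \in x -> 0 < v.
Proof. by move=> [h _] vx; rewrite -(nth_index 0 vx) h // index_mem. Qed.

Lemma cayley_wmax_size x : is_cayley x -> wmax x <= size x.
Proof.
move=> cx; rewrite -[wmax x](size_iota 1).
apply: uniq_leq_size; first exact: iota_uniq.
by move=> k; rewrite mem_iota => hk; apply: cx.2; lia.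
Qed.

Lemma perm_iota_cayley s n : perm_eq s (iota 1 n) -> is_cayley s.
Proof.
move=> ps; split.
  move=> i hi; have: nth 0 s i \in iota 1 n by rewrite -(perm_mem ps) mem_nth.
  by rewrite mem_iota => /andP[].
move=> k /andP [k1 kw]; rewrite (perm_mem ps) mem_iota k1 /=.
have : wmax s <= n.
  by apply: wmax_leq => v; rewrite (perm_mem ps) mem_iota; lia.
lia.
Qed.

Lemma perm_iota_is_perm s n : perm_eq s (iota 1 n) -> is_perm s.
Proof.
by move=> ps; split; [exact: perm_iota_cayley ps | rewrite (perm_uniq ps) iota_uniq].
Qed.

Lemma is_perm_iota s : is_perm s -> perm_eq s (iota 1 (size s)).
Proof.
move=> [cs us].
have e : s =i iota 1 (wmax s).
  move=> v; rewrite mem_iota; apply/idP/idP.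
    by move=> vs; have := cayley_gt0 cs vs; have := leq_wmax vs; lia.
  by move=> hv; apply: cs.2; lia.
have p := uniq_perm us (iota_uniq _ _) e.
by rewrite (perm_size p) size_iota.
Qed.

Lemma order_iso_sym a b : order_iso a b -> order_iso b a.
Proof.
move=> [e h]; split=> [|s t hs ht]; first by rewrite e.
rewrite e in hs ht; have [h1 h2] := h s t hs ht.
by split; split; [apply h1|apply h1|apply h2|apply h2].
Qed.

Lemma order_iso_trans a b c : order_iso a b -> order_iso b c -> order_iso a c.
Proof.
move=> [e1 h1] [e2 h2]; split=> [|s t hs ht]; first by rewrite e1.
have [h11 h12] := h1 s t ltac:(by rewrite e2) ltac:(by rewrite e2).
have [h21 h22] := h2 s t hs ht.
by split; [exact: iff_trans h11 h21 | exact: iff_trans h12 h22].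
Qed.

Lemma order_iso_map f s : {in s &, forall u v, (f u < f v) = (u < v)} ->
  order_iso (map f s) s.
Proof.
move=> hf; split=> [|i j hi hj]; first by rewrite size_map.
rewrite !(nth_map 0) //; have mi := mem_nth 0 hi; have mj := mem_nth 0 hj.
rewrite hf //; split=> //; split=> [e|->] //.
by case: (ltngtP (nth 0 s i) (nth 0 s j)) => // h; move: h; rewrite -hf // e ltnn.
Qed.

Lemma order_iso_gamma a b : order_iso a b -> gamma a = gamma b.
Proof.
move=> [e h]; rewrite !gammaE e.
apply: sorted_gamma_le_sort; last by rewrite perm_sort.
rewrite (@eq_in_sorted _ (mem (iota 1 (size b))) _ (gamma_le a)).
- by apply: sort_sorted; apply: gamma_le_total.
- move=> p q; rewrite !mem_iota => hp hq.
  have [h1 h2] := h p.-1 q.-1 ltac:(lia) ltac:(lia).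
  rewrite /gamma_le /gamma_rel /entry /=.
  by apply/orP/orP => [[/h1|/andP[/eqP/h2/eqP -> ->]]|[/h1|/andP[/eqP/h2/eqP -> ->]]];
    by [left | right].
- by apply/allP => v; rewrite mem_sort.
Qed.

Lemma count_ltn_iota v k : count (fun u => u < v) (iota 1 k) = minn v.-1 k.
Proof.
elim: k => [|k IH]; first by rewrite minn0.
rewrite -[k.+1]addn1 iotaD count_cat IH /= addn0 add1n.
by case: (ltnP k.+1 v) => h /=; lia.
Qed.

(* A rearrangement [p] of [1..k] is determined by its order type: [p(s)] is
   one more than the number of entries of [p] below it. *)
Lemma order_iso_perm_iota_eq p q k : perm_eq p (iota 1 k) -> perm_eq q (iota 1 k) ->
  order_iso p q -> p = q.
Proof.
move=> pp pq [e h].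
apply: (eq_from_nth (x0 := 0)) => // s hs.
have below r : perm_eq r (iota 1 k) -> s < size r ->
    count (fun i => nth 0 r i < nth 0 r s) (iota 0 (size r)) = (nth 0 r s).-1.
  move=> pr hsr; rewrite -(count_map (nth 0 r) (fun u => u < nth 0 r s)).
  rewrite -/(mkseq (nth 0 r) (size r)) mkseq_nth.
  rewrite (permP pr) count_ltn_iota.
  have : nth 0 r s \in iota 1 k by rewrite -(perm_mem pr) mem_nth.
  by rewrite mem_iota; lia.
have := below q pq ltac:(by rewrite -e); have := below p pp hs.
rewrite -e (@eq_in_count _ _ (fun i => nth 0 q i < nth 0 q s)); last first.
  move=> i; rewrite mem_iota add0n => /andP[_ hi].
  have [[H1 H2] _] := h i s ltac:(by rewrite -e) ltac:(by rewrite -e).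
  by apply/idP/idP => H; [apply: H1 | apply: H2].
have mp : nth 0 p s \in iota 1 k by rewrite -(perm_mem pp) mem_nth.
have mq : nth 0 q s \in iota 1 k by rewrite -(perm_mem pq) mem_nth -?e.
by move: mp mq; rewrite !mem_iota => mp mq -> H; lia.
Qed.

Definition rank_in (w : seq nat) (v : nat) := count (fun u => u <= v) (undup w).

Definition standardize (w : seq nat) := map (rank_in w) w.

Lemma rank_in_ltn w u v : v \in w -> u < v -> rank_in w u < rank_in w v.
Proof.
move=> vw uv; rewrite /rank_in.
have : count (predU (fun t => t <= u) (pred1 v)) (undup w)
         <= count (fun t => t <= v) (undup w).
  by apply: sub_count => t /orP [h|/eqP ->]; [lia|].
have disj : count (predI (fun t => t <= u) (pred1 v)) (undup w) = 0.
  by apply/eqP; rewrite -leqn0 leqNgt -has_count; apply/hasP => -[t _ /andP [/= h /eqP]]; lia.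
rewrite -[count (predU _ _) _]addn0 -disj count_predUI.
by rewrite count_uniq_mem ?undup_uniq // mem_undup vw; lia.
Qed.

Lemma rank_in_gt0 w v : v \in w -> 0 < rank_in w v.
Proof. by move=> vw; rewrite /rank_in -has_count; apply/hasP; exists v; rewrite ?mem_undup. Qed.

Lemma rank_in_leq w v : rank_in w v <= size (undup w).
Proof. exact: count_size. Qed.

Lemma order_iso_standardize w : order_iso w (standardize w).
Proof.
apply: order_iso_sym; apply: order_iso_map => u v uw vw.
case: (ltngtP u v) => [h|h|->]; first by rewrite rank_in_ltn.
  by apply/negbTE; rewrite -leqNgt ltnW // rank_in_ltn.
by rewrite ltnn.
Qed.

Lemma standardize_cayley w : is_cayley (standardize w).
Proof.
split=> [i|k /andP [k1 kw]].
  by rewrite size_map => hi; rewrite (nth_map 0) // rank_in_gt0 // mem_nth.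
have wmax_le : wmax (standardize w) <= size (undup w).
  by apply: wmax_leq => v /mapP [u _ ->]; apply: rank_in_leq.
have inj : {in undup w &, injective (rank_in w)}.
  move=> u v; rewrite !mem_undup => uw vw e.
  by case: (ltngtP u v) => // h; [have := rank_in_ltn vw h | have := rank_in_ltn uw h];
    rewrite e ltnn.
have U : uniq (map (rank_in w) (undup w)) by rewrite map_inj_in_uniq // undup_uniq.
have S : {subset map (rank_in w) (undup w) <= iota 1 (size (undup w))}.
  move=> r /mapP [u uw ->]; rewrite mem_undup in uw.
  by rewrite mem_iota rank_in_gt0 //= add1n ltnS rank_in_leq.
have [_ E] := uniq_min_size U S ltac:(by rewrite size_iota size_map).
have : k \in map (rank_in w) (undup w) by rewrite E mem_iota; lia.
by case/mapP => u; rewrite mem_undup => uw ->; apply: map_f.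
Qed.

(* Relabelling the positions selected by [m] by their ranks [1..k] carries
   [gamma_le x] to [gamma_le (mask m x)], so the selected positions, listed in
   [gamma x]-order, have the order type of [gamma (mask m x)]. *)
Lemma order_iso_sort_mask_gamma x m :
  order_iso (sort (gamma_le x) (mask m (iota 1 (size x)))) (gamma (mask m x)).
Proof.
set P := mask m (iota 1 (size x)); set w := mask m x.
have sP : sorted ltn P.
  by apply: (subseq_sorted ltn_trans (mask_subseq _ _)); apply: iota_ltn_sorted.
have uP : uniq P by apply: mask_uniq; apply: iota_uniq.
pose f p := (index p P).+1.
have f_mono : {in P &, forall u v, (f u < f v) = (u < v)}.
  move=> u v uP' vP'; rewrite /f ltnS.
  case: (ltngtP (index u P) (index v P)) => h.
  - by apply/esym; apply: (sorted_ltn_index ltn_trans sP).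
  - by apply/esym/negbTE; rewrite -leqNgt ltnW // (sorted_ltn_index ltn_trans sP).
  - by have := congr1 (nth 0 P) h; rewrite !nth_index // => ->; rewrite ltnn.
have ew : w = map (entry x) P by rewrite /w mask_entry.
have fP : map f P = iota 1 (size w).
  apply: (eq_from_nth (x0 := 0)); rewrite size_map ?size_iota ew size_map // => i hi.
  by rewrite (nth_map 0) // nth_iota ?size_map // /f index_uniq.
have entry_f p : p \in P -> entry w (f p) = entry x p.
  by move=> pP; rewrite /entry /f /= ew (nth_map 0) ?index_mem // nth_index.
have sort_f : sort (relpre f (gamma_le w)) P = sort (gamma_le x) P.
  apply: sorted_gamma_le_sort; last by rewrite perm_sort.
  rewrite (@eq_in_sorted _ (mem P) _ (relpre f (gamma_le w))).
  - by apply: sort_sorted => p q; apply: gamma_le_total.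
  - move=> p q pP qP; rewrite /= /gamma_le /gamma_rel /= !entry_f //.
    by rewrite [f q <= f p]leqNgt [q <= p]leqNgt f_mono.
  - by apply/allP => v; rewrite mem_sort.
rewrite gammaE -fP sort_map sort_f; apply: order_iso_sym.
by apply: order_iso_map => u v; rewrite !mem_sort; exact: f_mono.
Qed.

Lemma mask_gamma_sort x m : exists2 m', size m' = size x &
  mask m' (gamma x) = sort (gamma_le x) (mask m (iota 1 (size x))).
Proof.
set P := mask m (iota 1 (size x)).
have eP : P = filter (mem P) (iota 1 (size x)).
  by apply/subseq_uniqP; [apply: iota_uniq | apply: mask_subseq].
exists (map (mem P) (gamma x)); first by rewrite size_map size_gamma.
rewrite -filter_mask {2}eP -filter_sort ?gammaE //.
  exact: gamma_le_total.
exact: gamma_le_trans.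
Qed.

Lemma contains_gamma x z : contains x z -> contains (gamma x) (gamma z).
Proof.
move=> [m [_ oi]]; have [m' sm' e] := mask_gamma_sort x m.
exists m'; split; first by rewrite size_gamma.
by rewrite e -(order_iso_gamma oi); exact: order_iso_sort_mask_gamma.
Qed.

Lemma gamma_contains_class x y : contains (gamma x) (gamma y) ->
  exists z, [/\ is_cayley z, gamma z = gamma y & contains x z].
Proof.
move=> [m' [_ oi]]; set t := mask m' (gamma x) in oi.
have et : t = filter (mem t) (gamma x).
  by apply/subseq_uniqP; [apply: uniq_gamma | apply: mask_subseq].
set m := map (mem t) (iota 1 (size x)).
have sm : size m = size x by rewrite size_map size_iota.
have et2 : t = sort (gamma_le x) (mask m (iota 1 (size x))).
  rewrite {1}et gammaE filter_sort ?filter_mask //.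
    exact: gamma_le_total.
  exact: gamma_le_trans.
have oi' := order_iso_sort_mask_gamma x m; rewrite -et2 in oi'.
have oi_mask := order_iso_trans (order_iso_sym oi') oi.
have ez : gamma (mask m x) = gamma y.
  have [e _] := oi_mask; rewrite !size_gamma in e.
  apply: (order_iso_perm_iota_eq (perm_gamma_iota _) _ oi_mask).
  by rewrite e; exact: perm_gamma_iota.
exists (standardize (mask m x)); split; first exact: standardize_cayley.
  by rewrite -(order_iso_gamma (order_iso_standardize _)).
by exists m; split=> //; apply: order_iso_standardize.
Qed.

Lemma avoid_class_gamma x y :
  (forall z, is_cayley z -> gamma z = gamma y -> avoids x z) <->
  avoids (gamma x) (gamma y).
Proof.
split=> [av c | av z _ ez c].
  by have [z [cz ez cxz]] := gamma_contains_class c; exact: av z cz ez cxz.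
by apply: av; rewrite -ez; exact: contains_gamma.
Qed.

Section GammaEntries.

Variable x : seq nat.
Local Notation n := (size x).
Local Notation P j := (nth 0 (gamma x) j).

Lemma gamma_le_nth j k : j <= k -> k < n -> gamma_le x (P j) (P k).
Proof.
move=> jk kn.
apply: (sorted_leq_nth (@gamma_le_trans x) (@gamma_le_refl x) 0 (sorted_gamma x)) => //;
  rewrite inE size_gamma //; exact: leq_ltn_trans jk kn.
Qed.

Lemma entry_gamma_mono j k : j <= k -> k < n -> entry x (P j) <= entry x (P k).
Proof.
move=> jk kn; have := gamma_le_nth jk kn.
by rewrite /gamma_le /gamma_rel /= => /orP [/ltnW|/andP[/eqP -> _]].
Qed.

Lemma entry_gamma_eq j k : j < k -> k < n -> entry x (P j) = entry x (P k) -> P k < P j.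
Proof.
move=> jk kn e; have := gamma_le_nth (ltnW jk) kn.
rewrite /gamma_le /gamma_rel /= e ltnn eqxx /= leq_eqVlt => /orP [/eqP E|//].
move/eqP: E; rewrite nth_uniq ?size_gamma ?uniq_gamma //; last exact: ltn_trans jk kn.
by move=> /eqP E; move: jk; rewrite E ltnn.
Qed.

Lemma nth_gamma_range j : j < n -> 0 < P j <= n.
Proof. by move=> jn; rewrite -mem_gamma mem_nth // size_gamma. Qed.

Lemma nth_gamma_onto p : 0 < p <= n -> exists2 t, t < n & P t = p.
Proof.
rewrite -mem_gamma => pg.
by exists (index p (gamma x)); rewrite ?nth_index // -(size_gamma x) index_mem.
Qed.

Lemma entry_gamma_onto v : v \in x -> exists2 t, t < n & entry x (P t) = v.
Proof.
by move=> /entry_onto [p /nth_gamma_onto [t tn <-] <-]; exists t.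
Qed.

(* An ascent of [entry x] along [gamma x] ends a block of equal values, and
   within a block positions decrease: so [P j] is the leftmost occurrence. *)
Lemma gamma_ascent_leftmost j q : j.+1 < n -> entry x (P j) < entry x (P j.+1) ->
  0 < q <= n -> entry x q = entry x (P j) -> P j <= q.
Proof.
move=> jn h /nth_gamma_onto [t tn <-] e.
case: (ltngtP t j) => tj.
- by apply/ltnW/(entry_gamma_eq tj) => //; lia.
- by have := entry_gamma_mono tj tn; rewrite e; lia.
- by rewrite tj.
Qed.

Hypothesis cx : is_cayley x.

Lemma entry_gamma_gt0 j : j < n -> 0 < entry x (P j).
Proof. by move=> jn; apply: (cayley_gt0 cx); apply: entry_mem; apply: nth_gamma_range. Qed.

Lemma entry_gamma_nojump j : j.+1 < n -> entry x (P j.+1) <= (entry x (P j)).+1.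
Proof.
move=> jn; rewrite leqNgt; apply/negP => h.
set c := (entry x (P j)).+1 in h.
have [|t tn et] := @entry_gamma_onto c.
  apply: cx.2; rewrite /c /=; apply: leq_trans (ltnW h) (leq_wmax _).
  by apply: entry_mem; apply: nth_gamma_range.
case: (leqP t j) => tj.
  by have := entry_gamma_mono tj (ltnW jn); rewrite et ltnn.
by have := entry_gamma_mono tj tn; rewrite et; lia.
Qed.

Lemma entry_gamma0 : 0 < n -> entry x (P 0) = 1.
Proof.
move=> n0; have w1 : 1 <= wmax x.
  exact: leq_trans (cx.1 0 n0) (leq_wmax (mem_nth 0 n0)).
have [|t tn et] := @entry_gamma_onto 1; first by apply: cx.2; rewrite w1.
by have := entry_gamma_mono (leq0n t) tn; rewrite et; have := entry_gamma_gt0 n0; lia.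
Qed.

End GammaEntries.

Lemma rgf_prefix_values x q a : is_rgf x -> 0 < q <= size x -> 0 < a <= entry x q ->
  exists2 q', 0 < q' <= q & entry x q' = a.
Proof.
move=> rx; elim/ltn_ind: q a => q IH a hq ha.
have [-> | ne] := eqVneq a (entry x q); first by exists q => //; lia.
case: q IH hq ha ne => // q IH hq; rewrite /entry succnK => ha ne.
have [q0 | q_gt0] := posnP q.
  by move: ha ne; rewrite q0 rx.2.1; lia.
have hw := rx.2.2 q ltac:(lia).
have [i i_lt ei] : exists2 i, i < q & nth 0 x i = wmax (take q x).
  have qx : q <= size x by lia.
  have /(nthP 0) [i] := wmax_in (x := take q x) ltac:(rewrite size_takel; lia).
  by rewrite size_takel // => iq <-; exists i; rewrite ?nth_take.
have [q' hq' eq'] := IH i.+1 ltac:(lia) a ltac:(lia) ltac:(rewrite /entry /= ei; lia).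
by exists q' => //; lia.
Qed.


Lemma rgf_gamma_ascent x j : is_rgf x -> j.+1 < size x ->
  entry x (nth 0 (gamma x) j) < entry x (nth 0 (gamma x) j.+1) ->
  nth 0 (gamma x) j < nth 0 (gamma x) j.+1.
Proof.
move=> rx jn h; have Pj1 := nth_gamma_range jn.
have [q hq eq] := rgf_prefix_values rx Pj1 (a := entry x (nth 0 (gamma x) j))
  ltac:(rewrite entry_gamma_gt0 /=; [lia | exact: rx.1 | lia]).
have qP : q != nth 0 (gamma x) j.+1 by apply: contraTneq h => <-; rewrite eq ltnn.
by have := gamma_ascent_leftmost (q := q) jn h ltac:(lia) eq; lia.
Qed.

Definition ascents (pi : seq nat) j :=
  count (fun i => nth 0 pi i < nth 0 pi i.+1) (iota 0 j).

Lemma ascentsS pi j : ascents pi j.+1 = ascents pi j + (nth 0 pi j < nth 0 pi j.+1).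
Proof. by rewrite /ascents -{1}[j.+1]addn1 iotaD count_cat /= add0n addn0. Qed.

Lemma ascents_ivt pi j v : v <= ascents pi j -> exists2 j', j' <= j & ascents pi j' = v.
Proof.
elim: j v => [|j IH] v; first by rewrite leqn0 => /eqP ->; exists 0.
case: (leqP v (ascents pi j)) => [/IH [j' h <-] _|h1 h2]; first by exists j'; lia.
by exists j.+1 => //; move: h2 h1; rewrite ascentsS; case: (_ < _) => /=; lia.
Qed.

(* The inverse of [gamma] on restricted growth functions. *)
Definition rgf_of_flat (pi : seq nat) :=
  [seq (ascents pi (index p pi)).+1 | p <- iota 1 (size pi)].

Lemma size_rgf_of_flat pi : size (rgf_of_flat pi) = size pi.
Proof. by rewrite size_map size_iota. Qed.

Lemma entry_gamma_ascents x j : is_rgf x -> j < size x ->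
  entry x (nth 0 (gamma x) j) = (ascents (gamma x) j).+1.
Proof.
move=> rx; elim: j => [|j IH] jn; first by rewrite entry_gamma0 //; exact: rx.1.
have := IH (ltnW jn); have := entry_gamma_mono (leqnSn j) jn.
have := entry_gamma_nojump rx.1 jn; rewrite ascentsS.
case: (ltngtP (entry x (nth 0 (gamma x) j)) (entry x (nth 0 (gamma x) j.+1))) => h3.
- by rewrite (rgf_gamma_ascent rx jn h3) addn1; lia.
- lia.
- by rewrite ltnNge (ltnW (entry_gamma_eq (ltnSn j) jn h3)) /= addn0 -h3.
Qed.

Lemma rgf_of_flat_gamma x : is_rgf x -> rgf_of_flat (gamma x) = x.
Proof.
move=> rx; apply: (eq_from_nth (x0 := 0)); rewrite size_rgf_of_flat size_gamma // => i hi.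
rewrite (nth_map 0) ?size_iota ?size_gamma // nth_iota ?size_gamma // add1n.
have ig : i.+1 \in gamma x by rewrite mem_gamma.
have jn : index i.+1 (gamma x) < size x by rewrite -(size_gamma x) index_mem.
by rewrite -(entry_gamma_ascents rx jn) nth_index.
Qed.

Lemma gamma_rgf_inj x x' : is_rgf x -> is_rgf x' -> gamma x = gamma x' -> x = x'.
Proof. by move=> rx rx' e; rewrite -(rgf_of_flat_gamma rx) -(rgf_of_flat_gamma rx') e. Qed.

Lemma gamma_rgf_flat x : is_rgf x -> is_flat (gamma x).
Proof.
move=> rx; split; first exact: perm_iota_is_perm (perm_gamma_iota x).
move=> [i [k [ik [kn [lt_ki asc_i]]]]]; rewrite size_gamma in kn.
set v := entry x (nth 0 (gamma x) i).
have in1 : i.+1 < size x by lia.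
have ei1 : entry x (nth 0 (gamma x) i.+1) = v.+1.
  by rewrite /v !(entry_gamma_ascents rx) ?ascentsS ?asc_i ?addn1 //; lia.
have v_le := entry_gamma_mono (ltnW ik) kn; rewrite ei1 in v_le.
have Pk := nth_gamma_range kn.
have [q hq eq] := rgf_prefix_values rx Pk (a := v)
  ltac:(rewrite entry_gamma_gt0 /=; [lia | exact: rx.1 | lia]).
by have := @gamma_ascent_leftmost x i q in1 ltac:(by rewrite ei1) ltac:(lia) eq; lia.
Qed.

Section FlatDecoding.

Variable pi : seq nat.
Hypothesis fl : is_flat pi.
Local Notation n := (size pi).
Local Notation P j := (nth 0 pi j).

Lemma flat_perm_iota : perm_eq pi (iota 1 n).
Proof. exact: is_perm_iota fl.1. Qed.

Lemma flat_range j : j < n -> 0 < P j <= n.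
Proof.
move=> jn; have : P j \in iota 1 n by rewrite -(perm_mem flat_perm_iota) mem_nth.
by rewrite mem_iota add1n ltnS.
Qed.

Lemma flat_onto i : i < n -> exists2 j, j < n & P j = i.+1.
Proof.
move=> hi; have m : i.+1 \in pi by rewrite (perm_mem flat_perm_iota) mem_iota; lia.
by exists (index i.+1 pi); rewrite ?index_mem ?nth_index.
Qed.

Lemma entry_rgf_of_flat j : j < n -> entry (rgf_of_flat pi) (P j) = (ascents pi j).+1.
Proof.
move=> jn; have hr := flat_range jn.
rewrite /entry (nth_map 0) ?size_iota; last by lia.
rewrite nth_iota; last by lia.
by rewrite add1n prednK ?index_uniq //; [exact: fl.1.2 | lia].
Qed.

(* Flatness is used exactly here: once [pi] ascends at [i], every later
   entry before the next ascent stays above [P i]. *)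
Lemma flat_last_ascent j : j < n -> ascents pi j = 0 \/
  exists i, [/\ i < j, (ascents pi i).+1 = ascents pi j, P i < P i.+1 & P i < P j].
Proof.
elim: j => [|j IH] jn; first by left.
case: (boolP (P j < P j.+1)) => a.
  by right; exists j; rewrite ascentsS a addn1.
rewrite ascentsS (negbTE a) addn0.
case: (IH (ltnW jn)) => [->|[i [ij ai asc_i lt_ij]]]; first by left.
right; exists i; split => //; first by lia.
case: (ltngtP (P i) (P j.+1)) => // h.
  by case: fl.2; exists i, j.+1; do !split => //; lia.
have i_n : i < n by lia.
by move/eqP: h; rewrite (nth_uniq 0 i_n jn fl.1.2); lia.
Qed.

Lemma rgf_of_flat_cayley : is_cayley (rgf_of_flat pi).
Proof.
split=> [i|k /andP [k1 kw]]; first by rewrite size_rgf_of_flat => hi; rewrite (nth_map 0) ?size_iota.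
have n0 : 0 < size (rgf_of_flat pi) by case: (rgf_of_flat pi) kw => //=; rewrite leqNgt k1.
have /(nthP 0) [i] := wmax_in n0; rewrite size_rgf_of_flat => hi ei.
have [j jn Pj] := flat_onto hi.
have := entry_rgf_of_flat jn; rewrite Pj /entry /= ei => ew.
have [j' j'j aj'] := @ascents_ivt pi j k.-1 ltac:(lia).
have j'n : j' < n by lia.
have := entry_rgf_of_flat j'n; rewrite aj' prednK // => <-.
by apply: entry_mem; rewrite size_rgf_of_flat; exact: flat_range j'n.
Qed.

Lemma rgf_of_flat_rgf : is_rgf (rgf_of_flat pi).
Proof.
split; first exact: rgf_of_flat_cayley.
rewrite size_rgf_of_flat; split=> [n0 | i /andP [i1 hi]].
  have [j jn Pj] := flat_onto n0.
  have := entry_rgf_of_flat jn; rewrite Pj /entry /= => ->.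
  case: (flat_last_ascent jn) => [->//|[i [ij _ _]]].
  by rewrite Pj; have := flat_range (ltn_trans ij jn); lia.
have [j jn Pj] := flat_onto hi.
have := entry_rgf_of_flat jn; rewrite Pj /entry /= => ->.
case: (flat_last_ascent jn) => [->//|[i' [i'j <- _]]]; rewrite Pj ltnS => i'_le.
have i'n : i' < n by lia.
have r := flat_range i'n.
have := entry_rgf_of_flat i'n; rewrite /entry => <-.
rewrite ltnS leq_wmax // -(nth_take 0 (n0 := i)); last by lia.
by apply: mem_nth; rewrite size_takel ?size_rgf_of_flat; lia.
Qed.

Lemma gamma_rgf_of_flat : gamma (rgf_of_flat pi) = pi.
Proof.
rewrite gammaE size_rgf_of_flat; apply/esym/sorted_gamma_le_sort; last exact: flat_perm_iota.
apply/(sortedP 0) => j jn.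
rewrite /gamma_le /gamma_rel /= (entry_rgf_of_flat (ltnW jn)) (entry_rgf_of_flat jn) ascentsS.
by case: (boolP (P j < P j.+1)) => a /=; rewrite ?addn1 ?ltnSn // addn0 ltnn eqxx leqNgt.
Qed.

End FlatDecoding.

Lemma gamma_img_avoid_rgf y pi :
  gamma_img (avoid_class is_rgf y) pi <-> Flat (gamma y) pi.
Proof.
split=> [[x [[rx av] <-]] | [fl av]].
  by split; [exact: gamma_rgf_flat | exact/avoid_class_gamma].
exists (rgf_of_flat pi); split; last exact: gamma_rgf_of_flat.
split; first exact: rgf_of_flat_rgf.
by apply/avoid_class_gamma; rewrite gamma_rgf_of_flat.
Qed.

Lemma gamma_perm_inv s : is_perm s -> gamma (perm_inv s) = s.
Proof.
move=> ps; have pp := is_perm_iota ps; set n := size s in pp.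
have entry_s j : j < n -> entry (perm_inv s) (nth 0 s j) = j.+1.
  move=> jn; have : nth 0 s j \in iota 1 n by rewrite -(perm_mem pp) mem_nth.
  rewrite mem_iota => hr.
  rewrite /entry /perm_inv (nth_map 0) ?size_iota; last by lia.
  by rewrite nth_iota ?add1n ?prednK ?index_uniq //; try lia; exact: ps.2.
rewrite gammaE size_map size_iota; apply/esym/sorted_gamma_le_sort => //.
by apply/(sortedP 0) => j jn; rewrite /gamma_le /gamma_rel /= !entry_s //; lia.
Qed.

Definition tuple_of_seq n (t0 : n.-tuple 'I_n.+1) (s : seq nat) : n.-tuple 'I_n.+1 :=
  insubd t0 [seq inord i | i <- s].

Lemma tuple_of_seqK n (t0 : n.-tuple 'I_n.+1) s : size s = n ->
  (forall v, v \in s -> v <= n) -> [seq val i | i <- tuple_of_seq t0 s] = s.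
Proof.
move=> ss hs; rewrite /tuple_of_seq insubdK; last by rewrite -topredE /= size_map ss.
by rewrite -map_comp; apply: map_id_in => v vs /=; rewrite inordK // ltnS hs.
Qed.

Lemma count_len_gamma_img E n :
  (forall x, E x -> is_cayley x) ->
  (forall x x', E x -> E x' -> gamma x = gamma x' -> x = x') ->
  count_len (gamma_img E) n = count_len E n.
Proof.
move=> cayE injE; rewrite /count_len.
set A := [set t : n.-tuple 'I_n.+1 | `[< E [seq val i | i <- t] >]].
pose F (t : n.-tuple 'I_n.+1) := tuple_of_seq t (gamma [seq val i | i <- t]).
have valF t : [seq val i | i <- F t] = gamma [seq val i | i <- t].
  apply: tuple_of_seqK; first by rewrite size_gamma size_map size_tuple.
  by move=> v; rewrite mem_gamma size_map size_tuple => /andP[].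
have -> : [set t : n.-tuple 'I_n.+1 | `[< gamma_img E [seq val i | i <- t] >]] = F @: A.
  apply/setP => t; rewrite inE; apply/asboolP/imsetP => [[x [Ex ex]] | [s sA ->]].
    have sx : size x = n by rewrite -(size_gamma x) ex size_map size_tuple.
    have x_le v : v \in x -> v <= n.
      by rewrite -sx => vx; exact: leq_trans (leq_wmax vx) (cayley_wmax_size (cayE _ Ex)).
    exists (tuple_of_seq t x); first by rewrite inE; apply/asboolP; rewrite tuple_of_seqK.
    by apply/val_inj/(inj_map val_inj); rewrite valF tuple_of_seqK.
  by rewrite valF; rewrite inE in sA; exists [seq val i | i <- s]; split => //; exact/asboolP.
rewrite card_in_imset // => t1 t2; rewrite !inE => /asboolP E1 /asboolP E2 e.
have := congr1 (fun t : n.-tuple 'I_n.+1 => [seq val i | i <- t]) e.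
by rewrite /= !valF => /(injE _ _ E1 E2) /(inj_map val_inj) /val_inj.
Qed.

Theorem theorem6p4 :
  (forall sigma : seq nat, is_perm sigma ->
     (forall pi, Flat sigma pi <-> gamma_img (avoid_class is_rgf (perm_inv sigma)) pi)) /\
  (forall y : seq nat, is_cayley y ->
     (forall pi, gamma_img (avoid_class is_rgf y) pi <-> Flat (gamma y) pi)) /\
  (forall (sigma : seq nat) (n : nat), is_perm sigma ->
     count_len (Flat sigma) n = count_len (avoid_class is_rgf (perm_inv sigma)) n).
Proof.
have flat_gamma_img sigma : is_perm sigma ->
    forall pi, Flat sigma pi <-> gamma_img (avoid_class is_rgf (perm_inv sigma)) pi.
  by move=> ps pi; rewrite gamma_img_avoid_rgf gamma_perm_inv.
split=> //; split=> [y _ pi | sigma n ps]; first exact: gamma_img_avoid_rgf.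
have -> : Flat sigma = gamma_img (avoid_class is_rgf (perm_inv sigma)).
  by apply/funext => pi; apply/propext; exact: flat_gamma_img.
apply: count_len_gamma_img => [x [[cx _] _] // | x x' [rx _] [rx' _]].
exact: gamma_rgf_inj.
Qed.
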